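(* Let $S$ be a nondegenerate $n$-dimensional simplex with $S\subset Q_n\subset nS$. Then replacing any vertex of $S$ by an arbitrary point of $Q_n$ yields a simplex whose volume does not exceed $\mathrm{vol}(S)$.
   Context: $Q_n=[0,1]^n$. $nS$ denotes the image of $S$ under the homothety with center at the center of gravity of $S$ and ratio $n$. *)

From HB Require Import structures.
From mathcomp Require Import all_boot all_order all_algebra.
From mathcomp Require Import reals.
Set Implicit Arguments. Unset Strict Implicit. Unset Printing Implicit Defensive.
Import Order.TTheory GRing.Theory Num.Theory.
Local Open Scope ring_scope.

(* Points of R^n are row vectors 'rV[R]_n; an n-dimensional simplex is given
   by its n+1 vertices v : 'I_n.+1 -> 'rV[R]_n. *)

Definition in_cube (R : realType) (n : nat) (x : 'rV[R]_n) : Prop :=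
  forall i : 'I_n, 0 <= x ord0 i <= 1.

Definition in_simplex (R : realType) (n : nat) (v : 'I_n.+1 -> 'rV[R]_n)
    (x : 'rV[R]_n) : Prop :=
  exists l : 'I_n.+1 -> R,
    (forall i, 0 <= l i) /\ \sum_i l i = 1 /\ x = \sum_i l i *: v i.

Definition centroid (R : realType) (n : nat) (v : 'I_n.+1 -> 'rV[R]_n) : 'rV[R]_n :=
  (n.+1%:R)^-1 *: \sum_i v i.

Definition in_homothetic (R : realType) (n : nat) (k : R)
    (v : 'I_n.+1 -> 'rV[R]_n) (x : 'rV[R]_n) : Prop :=
  exists y, in_simplex v y /\ x = centroid v + k *: (y - centroid v).

(* The (n+1)x(n+1) vertex matrix: row i is (v_i, 1). *)
Definition vertex_mx (R : realType) (n : nat) (v : 'I_n.+1 -> 'rV[R]_n)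
    : 'M[R]_n.+1 :=
  \matrix_(i < n.+1, j < n.+1)
     (if unlift ord_max j is Some k then v i ord0 k else 1).

Definition nondeg_simplex (R : realType) (n : nat) (v : 'I_n.+1 -> 'rV[R]_n) : Prop :=
  \det (vertex_mx v) != 0.

Definition simplex_vol (R : realType) (n : nat) (v : 'I_n.+1 -> 'rV[R]_n) : R :=
  `|\det (vertex_mx v)| / (n`!)%:R.

Definition replace_vertex (R : realType) (n : nat) (v : 'I_n.+1 -> 'rV[R]_n)
    (j : 'I_n.+1) (x : 'rV[R]_n) : 'I_n.+1 -> 'rV[R]_n :=
  fun i => if i == j then x else v i.

From mathcomp Require Import all_boot all_order all_algebra.
From mathcomp Require Import reals lra.
Import Order.TTheory GRing.Theory Num.Theory.
Set Implicit Arguments. Unset Strict Implicit. Unset Printing Implicit Defensive.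
Local Open Scope ring_scope.

(* Write points of R^n in homogeneous coordinates (x, 1) and let
   A be the vertex matrix of S (rows (v_i, 1)), L = A^-1.  For a point y the
   row y *m L holds its barycentric coordinates lambda_i(y) w.r.t. S, and by
   Cramer's rule replacing vertex j by x multiplies det A by lambda_j(x).  So it
   suffices to show |lambda_j(x)| <= 1 for every x in Q_n.
   - Q_n in nS gives lambda_i(x) >= (1 - n)/(n + 1) >= -1 on Q_n.
   - For the upper bound let M_i, m_i be the max and min of the affine function
     lambda_i over the cube.  Since the cube is symmetric about its centre,
     M_i + m_i = lambda_i(0) + lambda_i(1,...,1), and barycentric coordinates
     sum to 1, hence sum_i (M_i + m_i) = 2.  With m_i >= (1 - n)/(n + 1) this
     gives sum_i M_i <= n + 1, while M_i >= lambda_i(v_i) = 1 as S lies in Q_n. *)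

Lemma det_replace_row (F : fieldType) (m : nat) (A : 'M[F]_m) (j : 'I_m) (y : 'rV[F]_m) :
  A \in unitmx ->
  \det (\matrix_(i, k) if i == j then y 0 k else A i k) = (y *m invmx A) 0 j * \det A.
Proof.
move=> uA; have dA : \det A != 0 by rewrite -unitfE -unitmxE.
rewrite (expand_det_row _ j) /invmx uA mxE big_distrl /=; apply: eq_bigr => k _.
rewrite !mxE eqxx -!mulrA; congr (_ * _).
rewrite /cofactor [RHS]mulrCA [_ * \det A]mulrC mulKf //; congr (_ * \det _).
by apply/matrixP => a b; rewrite !mxE eq_sym (negbTE (neq_lift j a)).
Qed.

(* Affine functions y |-> \sum_k y_k c_k on the unit cube, in homogeneous
   coordinates: the last coordinate is the constant term. *)
Section CubeExtrema.
Variables (R : realFieldType) (n : nat).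

Definition hcube (y : 'rV[R]_n.+1) : Prop :=
  y 0 ord_max = 1 /\ forall k, 0 <= y 0 k <= 1.

Definition cube_max (c : 'I_n.+1 -> R) : R :=
  \sum_k (if k == ord_max then c k else Num.max (c k) 0).

Definition cube_min (c : 'I_n.+1 -> R) : R :=
  \sum_k (if k == ord_max then c k else Num.min (c k) 0).

Definition argmin_vertex (c : 'I_n.+1 -> R) : 'rV[R]_n.+1 :=
  \row_k ((k == ord_max) || (c k < 0))%:R.

Lemma le_cube_max (c : 'I_n.+1 -> R) (y : 'rV[R]_n.+1) :
  hcube y -> \sum_k y 0 k * c k <= cube_max c.
Proof.
move=> [y_last y01]; apply: ler_sum => k _.
case: eqP => [->|_]; first by rewrite y_last mul1r.
have /andP[y0 y1] := y01 k.
by have [c0|c0] := lerP 0 (c k); nra.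
Qed.

Lemma argmin_vertex_hcube (c : 'I_n.+1 -> R) : hcube (argmin_vertex c).
Proof.
split=> [|k]; first by rewrite mxE eqxx.
by rewrite mxE; case: (_ || _); rewrite /= ?ler01 ?lexx.
Qed.

Lemma argmin_vertexE (c : 'I_n.+1 -> R) :
  \sum_k argmin_vertex c 0 k * c k = cube_min c.
Proof.
apply: eq_bigr => k _; rewrite mxE; case: eqP => _ /=; first by rewrite mul1r.
by have [c0|c0] := ltrP (c k) 0; rewrite /= ?mul1r ?mul0r.
Qed.

(* The cube is centrally symmetric: max + min = value at 0 + value at 1. *)
Lemma cube_max_add_min (c : 'I_n.+1 -> R) :
  cube_max c + cube_min c = c ord_max + \sum_k c k.
Proof.
rewrite -big_split /= (bigD1 ord_max) //= [\sum_k c k](bigD1 ord_max) //= eqxx.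
rewrite addrA; congr (_ + _); apply: eq_bigr => k /negbTE ->.
by rewrite addr_max_min addr0.
Qed.

End CubeExtrema.

(* A is the vertex matrix of a simplex inscribed in the cube, L its inverse,
   so (y *m L) 0 i is the i-th barycentric coordinate of y; the barycentric
   coordinates of cube points are bounded below as for Q_n inside nS. *)
Section BarycentricBound.
Variables (R : realFieldType) (n : nat) (A L : 'M[R]_n.+1).
Hypothesis LA : L *m A = 1%:M.
Hypothesis AL : A *m L = 1%:M.
Hypothesis A_rows : forall i, hcube (row i A).
Hypothesis bary_lower :
  forall y, hcube y -> forall i, (1 - n%:R) / n.+1%:R <= (y *m L) 0 i.

(* The rows of L sum to the last unit vector, because the last column of A is
   all ones; equivalently, barycentric coordinates sum to 1. *)
Lemma inv_row_sum k : \sum_i L k i = (k == ord_max)%:R.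
Proof.
have := congr1 (fun M : 'M[R]_n.+1 => M k ord_max) LA; rewrite !mxE => <-.
apply: eq_bigr => i _; have := (A_rows i).1.
by rewrite mxE => ->; rewrite mulr1.
Qed.

Lemma bary_vertex i : \sum_k row i A 0 k * L k i = 1.
Proof.
have := congr1 (fun M : 'M[R]_n.+1 => M i i) AL; rewrite !mxE eqxx mulr1n => <-.
by apply: eq_bigr => k _; rewrite mxE.
Qed.

Lemma bary_le1 y : hcube y -> forall j, (y *m L) 0 j <= 1.
Proof.
move=> hy j.
pose M i := cube_max (L ^~ i); pose m i := cube_min (L ^~ i).
have M_ge1 i : 1 <= M i by rewrite -(bary_vertex i); exact: le_cube_max.
have m_ge i : (1 - n%:R) / n.+1%:R <= m i.
  rewrite /m -argmin_vertexE; have := bary_lower (argmin_vertex_hcube (L ^~ i)) i.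
  by rewrite mxE.
have sum_Mm : \sum_i (M i + m i) = 2.
  under eq_bigr do rewrite cube_max_add_min.
  rewrite big_split /= inv_row_sum exchange_big /=.
  under eq_bigr do rewrite inv_row_sum.
  rewrite (bigD1 ord_max) //= big1 => [|i /negbTE -> //].
  by rewrite eqxx addr0.
have sum_m : 1 - n%:R <= \sum_i m i.
  have : \sum_(i < n.+1) (1 - n%:R) / n.+1%:R <= \sum_i m i.
    by apply: ler_sum => i _; exact: m_ge.
  by rewrite sumr_const card_ord -[_ *+ n.+1]mulr_natr divfK ?pnatr_eq0.
have sum_M_other : n%:R <= \sum_(i | i != j) M i.
  have : \sum_(i < n.+1 | i != j) (1 : R) <= \sum_(i | i != j) M i.
    by apply: ler_sum => i _; exact: M_ge1.
  by rewrite sumr_const cardC1 card_ord.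
have M_le1 : M j <= 1.
  move: sum_Mm; rewrite big_split (bigD1 j) //=; lra.
apply: le_trans M_le1; rewrite mxE; exact: le_cube_max.
Qed.

End BarycentricBound.

Definition homog (R : nzRingType) (n : nat) (x : 'rV[R]_n) : 'rV[R]_n.+1 :=
  \row_k (if unlift ord_max k is Some k' then x 0 k' else 1).

Section Homogeneous.
Variables (R : realType) (n : nat).
Implicit Types (x : 'rV[R]_n) (v : 'I_n.+1 -> 'rV[R]_n).

Lemma hcube_homog x : in_cube x -> hcube (homog x).
Proof.
move=> Qx; split=> [|k]; first by rewrite mxE unlift_none.
rewrite mxE; case: unliftP => [k' _|_]; last by rewrite ler01 lexx.
by have := Qx k'; rewrite [ord0]ord1.
Qed.

Lemma hcube_homogP (y : 'rV[R]_n.+1) :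
  hcube y -> exists2 x, in_cube x & homog x = y.
Proof.
move=> [y_last y01]; exists (\row_k y 0 (lift ord_max k)) => [k|].
  by rewrite mxE.
apply/matrixP => a k; rewrite [a]ord1 !mxE; case: unliftP => [k' ->|->].
  by rewrite mxE.
by rewrite y_last.
Qed.

Lemma row_vertex_mx v i : row i (vertex_mx v) = homog (v i).
Proof. by apply/matrixP => a k; rewrite !mxE. Qed.

Lemma vertex_mx_replace v j x :
  vertex_mx (replace_vertex v j x) =
  \matrix_(i, k) if i == j then homog x 0 k else vertex_mx v i k.
Proof. by apply/matrixP => i k; rewrite !mxE /replace_vertex; case: (i == j). Qed.

Lemma vertex_in_simplex v i : in_simplex v (v i).
Proof.
exists (fun i' => (i' == i)%:R); split=> [i'|]; first exact: ler0n.
split; first by rewrite (bigD1 i) //= eqxx big1 ?addr0 // => i' /negbTE ->.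
rewrite (bigD1 i) //= eqxx scale1r big1 ?addr0 // => i' /negbTE ->.
by rewrite scale0r.
Qed.

Lemma homog_affine_comb v (w : 'I_n.+1 -> R) :
  \sum_i w i = 1 -> homog (\sum_i w i *: v i) = \row_i w i *m vertex_mx v.
Proof.
move=> w1; apply/matrixP => a k; rewrite [a]ord1 !mxE.
case: unliftP => [k' ->|->] /=.
  by rewrite summxE; apply: eq_bigr => i _; rewrite !mxE liftK.
by rewrite -w1; apply: eq_bigr => i _; rewrite !mxE unlift_none mulr1.
Qed.

(* A point of kS, k >= 0, is an affine combination of the vertices with
   weights (1 - k)/(n + 1) + k mu_i >= (1 - k)/(n + 1). *)
Lemma homothetic_weights v (k : R) x : 0 <= k -> in_homothetic k v x ->
  exists w : 'I_n.+1 -> R, [/\ \sum_i w i = 1, x = \sum_i w i *: v i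
                             & forall i, (1 - k) / n.+1%:R <= w i].
Proof.
move=> k0 [y [[mu [mu0 [mu1 ->]]] ->]].
exists (fun i => (1 - k) / n.+1%:R + k * mu i); split.
- rewrite big_split /= sumr_const card_ord -big_distrr /= mu1 mulr1.
  by rewrite -[_ *+ n.+1]mulr_natr divfK ?pnatr_eq0 // subrK.
- under [RHS]eq_bigr do rewrite scalerDl -scalerA.
  rewrite big_split /= -!scaler_sumr -scalerA /centroid.
  set c := _ *: \sum_i v i.
  by rewrite scalerBr scalerBl scale1r addrA addrAC.
- by move=> i; rewrite lerDl mulr_ge0.
Qed.

Lemma bary_homothetic v (k : R) x : nondeg_simplex v -> 0 <= k ->
  in_homothetic k v x ->
  forall i, (1 - k) / n.+1%:R <= (homog x *m invmx (vertex_mx v)) 0 i.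
Proof.
move=> nd k0 /(homothetic_weights k0) [w [w1 -> w_ge]] i.
rewrite homog_affine_comb // -mulmxA mulmxV ?mulmx1 ?mxE //.
by rewrite unitmxE unitfE.
Qed.

End Homogeneous.

Theorem mainTheorem4 (R : realType) (n : nat) (v : 'I_n.+1 -> 'rV[R]_n) :
  nondeg_simplex v ->
  (forall x, in_simplex v x -> in_cube x) ->
  (forall x, in_cube x -> in_homothetic n%:R v x) ->
  forall (j : 'I_n.+1) (x : 'rV[R]_n), in_cube x ->
    simplex_vol (replace_vertex v j x) <= simplex_vol v.
Proof.
move=> nd S_in_Q Q_in_nS j x Qx.
set A := vertex_mx v.
have uA : A \in unitmx by rewrite unitmxE unitfE.
have A_rows i : hcube (row i A).
  by rewrite row_vertex_mx; apply/hcube_homog/S_in_Q/vertex_in_simplex.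
have lower y : hcube y -> forall i, (1 - n%:R) / n.+1%:R <= (y *m invmx A) 0 i.
  by move=> /hcube_homogP [x' Qx' <-]; apply: bary_homothetic (Q_in_nS _ Qx').
have coord_le1 : `|(homog x *m invmx A) 0 j| <= 1.
  rewrite ler_norml (bary_le1 (mulVmx uA) (mulmxV uA) A_rows lower (hcube_homog Qx)).
  rewrite andbT; apply: le_trans (lower _ (hcube_homog Qx) j).
  rewrite ler_pdivlMr ?ltr0Sn // [n.+1%:R]mulrS; have := ler0n R n; lra.
rewrite /simplex_vol vertex_mx_replace det_replace_row // normrM.
by rewrite ler_wpM2r ?invr_ge0 ?ler0n // ler_piMl.
Qed.
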